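(* Let $n,m$ be positive integers and $\mathbf a,\mathbf b\in\{0,1\}^n$. If the $(\mathbf a,\mathbf b)$-entry of $(A_n)^m$ is positive, then so is the $(\mathbf a,\mathbf b)$-entry of $(A_n)^{m+1}$. Furthermore, the $(\mathbf a,\mathbf b)$-entry of $(A_n)^m$ is positive if and only if $\mathbf a\trianglerighteq_z\mathbf b$ for some $z\le m$.
   Context: Dominance: $\mathbf v\trianglerighteq\mathbf w$ iff $\sum_{k\le i}v_k\ge\sum_{k\le i}w_k$ for all $i$. For $\mathbf v\in\mathbb N^n$, $\chi(\mathbf v)_i=1$ if $v_i>0$ and $0$ otherwise. For $\mathbf v,\mathbf w\in\mathbb N^n$ with $\mathbf v\trianglerighteq\mathbf w$ and $\chi(\mathbf v)\trianglerighteq\chi(\mathbf w)$, let $Z_{\mathbf v}=\{i:v_i=0\}$, $Z_{\mathbf w}=\{i:w_i=0\}$, and construct the matching $M\subseteq Z_{\mathbf v}\times Z_{\mathbf w}$ by repeatedly taking the largest unmatched index $i'\in Z_{\mathbf v}$ and matching it to the largest unmatched index in $Z_{\mathbf w}$ that is $\le i'$, until all of $Z_{\mathbf v}$ is matched. With $z=\max\{\max\{i-j:(i,j)\in M\},1\}$ one says $\mathbf v$ $z$-dominates $\mathbf w$, written $\mathbf v\trianglerighteq_z\mathbf w$ (this notation always presupposes $\mathbf v\trianglerighteq\mathbf w$ and $\chi(\mathbf v)\trianglerighteq\chi(\mathbf w)$). $A_n$ is the $2^n\times2^n$ matrix with rows and columns indexed by $\{0,1\}^n$, with $(A_n)_{\mathbf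 u,\mathbf v}=1$ if $\mathbf u\trianglerighteq_1\mathbf v$ and $0$ otherwise. *)

From HB Require Import structures.
From mathcomp Require Import all_boot all_order all_algebra.
Set Implicit Arguments. Unset Strict Implicit. Unset Printing Implicit Defensive.
Import GRing.Theory.

(* Vectors in N^n are finite functions 'I_n -> nat; index i : 'I_n is the
   paper's index i+1 (0-based indexing; only differences of indices matter). *)
Notation nvec n := {ffun 'I_n -> nat}.

Definition dom n (v w : nvec n) : bool :=
  [forall i : 'I_n, \sum_(k < n | k <= i) w k <= \sum_(k < n | k <= i) v k].

Definition chi n (v : nvec n) : nvec n := [ffun i => nat_of_bool (0 < v i)].

Definition zeros_desc n (v : nvec n) : seq nat :=
  rev [seq val i | i <- enum 'I_n & v i == 0].
Definition zeros n (v : nvec n) : seq nat :=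
  [seq val i | i <- enum 'I_n & v i == 0].

(* Greedy matching: take the largest unmatched i' of Z_v (zv is decreasing),
   match it with the largest unmatched j in Z_w (avail) with j <= i'.
   Returns None if at some step no such j exists. *)
Fixpoint greedy_match (zv avail : seq nat) : option (seq (nat * nat)) :=
  match zv with
  | [::] => Some [::]
  | i :: zv' =>
      let c := [seq j <- avail | j <= i] in
      if c is [::] then None
      else let j := foldr maxn 0 c in
           if greedy_match zv' (rem j avail) is Some M then Some ((i, j) :: M)
           else None
  end.

Definition matching n (v w : nvec n) : option (seq (nat * nat)) :=
  greedy_match (zeros_desc v) (zeros w).

(* z = max{ max{i - j : (i,j) in M}, 1 }  (all pairs satisfy j <= i). *)
Definition zval (M : seq (nat * nat)) : nat :=
  maxn (foldr maxn 0 [seq p.1 - p.2 | p <- M]) 1.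

Definition zdom n (z : nat) (v w : nvec n) : bool :=
  [&& dom v w, dom (chi v) (chi w) &
      if matching v w is Some M then zval M == z else false].

Notation bvec n := {ffun 'I_n -> bool}.
Definition natv n (u : bvec n) : nvec n := [ffun i => nat_of_bool (u i)].

Definition A_mat n : 'M[nat]_(#|{: bvec n}|) :=
  \matrix_(i, j) nat_of_bool (zdom 1 (natv (enum_val i)) (natv (enum_val j))).

Definition Apow_entry n (m : nat) (a b : bvec n) : nat :=
  (((A_mat n) ^+ m)%R) (enum_rank a) (enum_rank b).

From mathcomp Require Import all_boot all_order all_algebra.
From mathcomp Require Import zify.
Set Implicit Arguments. Unset Strict Implicit. Unset Printing Implicit Defensive.

(* For 0/1 vectors, [a ⊵_z b] holds for some [z <= m] exactly when there is an
   injection [phi] from the zero set of [a] into that of [b] with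
   [phi i <= i <= phi i + m]: the greedy matching is such an injection, and an
   exchange argument shows that greedy succeeds, with shifts at most [m],
   whenever any such injection exists.  Injections compose, adding their
   shifts; conversely an increasing injection with shifts at most [m + 1]
   factors through the vector whose zeros are the [max (phi i) (i - 1)], as a
   1-step followed by an [m]-step.  Hence the [(a, b)]-entry of [A_n ^ m] is
   positive iff such an injection with shifts at most [m] exists, a condition
   that only weakens as [m] grows. *)

Lemma foldr_maxn_ub s x : x \in s -> x <= foldr maxn 0 s.
Proof. by elim: s => //= y s IH /predU1P [->|/IH]; lia. Qed.

Lemma foldr_maxn_mem x s : foldr maxn 0 (x :: s) \in x :: s.
Proof.
elim: s x => [|y s IH] x /=; first by rewrite maxn0 mem_head.
have := IH y; rewrite /=.
case: (leqP x (maxn y (foldr maxn 0 s))) => _; last by rewrite mem_head.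
by move=> h; rewrite inE h orbT.
Qed.

Lemma foldr_maxn_leq s z : (foldr maxn 0 s <= z) = all (fun x => x <= z) s.
Proof. by elim: s => //= x s <-; rewrite geq_max. Qed.

Definition shift_embedding z (zv zw : seq nat) (phi : nat -> nat) : Prop :=
  {in zv, forall i, [&& phi i \in zw, phi i <= i & i - phi i <= z]} /\
  {in zv &, injective phi}.

Definition shifts_le z (M : seq (nat * nat)) : bool :=
  all (fun p => p.1 - p.2 <= z) M.

Section ShiftEmbedding.
Implicit Types (zu zv zw : seq nat) (phi psi : nat -> nat).

Lemma eq_shift_embedding z zv zv' zw zw' phi : zv =i zv' -> zw =i zw' ->
  shift_embedding z zv zw phi -> shift_embedding z zv' zw' phi.
Proof.
move=> Ev Ew [hphi inj]; split=> [i | x y]; rewrite -!Ev -?Ew; [exact: hphi | exact: inj].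
Qed.

Lemma shift_embedding_comp z1 z2 zu zv zw phi psi :
  shift_embedding z1 zu zv phi -> shift_embedding z2 zv zw psi ->
  shift_embedding (z1 + z2) zu zw (psi \o phi).
Proof.
move=> [hphi injphi] [hpsi injpsi]; split=> [i iu | x y xu yu /= e].
  have /and3P [pv pi pz] := hphi i iu; have /and3P [qw qi qz] := hpsi _ pv.
  rewrite /= qw /=; lia.
have /and3P [xv _ _] := hphi x xu; have /and3P [yv _ _] := hphi y yu.
by apply: injphi => //; apply: injpsi.
Qed.

Lemma shift_embedding_count_leq z zv zw phi t : uniq zv ->
  shift_embedding z zv zw phi ->
  count (fun x => x <= t) zv <= count (fun x => x <= t) zw.
Proof.
move=> uv [hphi inj]; rewrite -!size_filter -(size_map phi).
apply: uniq_leq_size.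
  rewrite map_inj_in_uniq ?filter_uniq // => x y.
  by rewrite !mem_filter => /andP [_ xv] /andP [_ yv]; apply: inj.
move=> _ /mapP [x + ->]; rewrite mem_filter => /andP [xt xv].
have /and3P [pw pi _] := hphi x xv.
by rewrite mem_filter pw andbT (leq_trans pi xt).
Qed.

(* Redirecting to [phi i] whatever [phi] sent to [j] frees [j] while keeping
   the shifts bounded, because every other index is below [i]. *)
Lemma shift_embedding_exchange z i zv avail phi j :
  all (gtn i) zv -> uniq avail -> shift_embedding z (i :: zv) avail phi ->
  phi i <= j -> exists phi', shift_embedding z zv (rem j avail) phi'.
Proof.
move=> /allP lti ua [hphi inj] pij.
have zv_sub x : x \in zv -> x \in i :: zv by rewrite inE orbC => ->.
have /and3P [pa _ pz] := hphi i (mem_head _ _).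
have phi_i_fresh y : y \in zv -> phi i != phi y.
  move=> yv; apply/eqP => /inj eiy; have := lti y yv.
  by rewrite /= -eiy ?ltnn ?mem_head ?zv_sub.
exists (fun x => if phi x == j then phi i else phi x); split=> [x xv | x y xv yv].
  have /and3P [xa xle xz] := hphi x (zv_sub x xv); have xi : x < i := lti x xv.
  rewrite (mem_rem_uniq _ ua) inE /=.
  case: (eqVneq (phi x) j) => [ej | nej]; last by rewrite nej xa xle xz.
  by rewrite -ej phi_i_fresh // pa /=; lia.
case: eqP => [ejx | _]; case: eqP => [ejy | _].
- by move=> _; apply: inj; rewrite ?zv_sub // ejx ejy.
- by move/eqP; rewrite (negbTE (phi_i_fresh y yv)).
- by move/esym/eqP; rewrite (negbTE (phi_i_fresh x xv)).
- by apply: inj; rewrite zv_sub.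
Qed.

(* Each index moves down by at most one to [psi i = max (phi i) (i - 1)], and
   [psi] is still increasing, so [phi] factors through [psi]. *)
Lemma shift_embedding_split z zv zw phi :
  shift_embedding z.+1 zv zw phi -> {in zv &, {homo phi : x y / x < y}} ->
  exists psi, shift_embedding 1 zv (map psi zv) psi /\
              exists chi, shift_embedding z (map psi zv) zw chi.
Proof.
move=> [hphi _] mono; pose psi i := maxn (phi i) i.-1.
have psi_mono : {in zv &, {homo psi : x y / x < y}}.
  move=> x y xv yv xy; have := mono x y xv yv xy.
  have /and3P [_ px _] := hphi x xv; rewrite /psi; lia.
have psi_inj : {in zv &, injective psi} by apply/incn_inj_in/leq_mono_in.
exists psi; split.
  split=> // i iv; rewrite map_f //=; have /and3P [_ pi _] := hphi i iv.
  rewrite /psi; lia.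
exists (fun k => phi (nth 0 zv (index k (map psi zv)))); split.
  move=> _ /mapP [i iv ->]; rewrite nth_index_map //.
  have /and3P [pw pi pz] := hphi i iv; rewrite pw /psi /=; lia.
move=> _ _ /mapP [x xv ->] /mapP [y yv ->]; rewrite !nth_index_map // => e.
by congr psi; apply: (incn_inj_in (leq_mono_in mono)).
Qed.

End ShiftEmbedding.

Lemma greedy_match_complete z zv avail phi :
  sorted gtn zv -> uniq avail -> shift_embedding z zv avail phi ->
  exists2 M, greedy_match zv avail = Some M & shifts_le z M.
Proof.
elim: zv avail phi => [|i zv IH] avail phi /=; first by exists [::].
move=> si ua hphi.
have lti := order_path_min (rev_trans ltn_trans) si.
have /and3P [pa pi pz] := hphi.1 i (mem_head _ _).
have : phi i \in [seq j <- avail | j <= i] by rewrite mem_filter pa pi.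
case: [seq j <- avail | j <= i] => [//|x s] /foldr_maxn_ub.
set j := foldr maxn 0 (x :: s) => pj.
have [phi' hphi'] := shift_embedding_exchange lti ua hphi pj.
have [M -> hM] := IH _ _ (path_sorted si) (rem_uniq _ ua) hphi'.
by exists ((i, j) :: M); rewrite //= hM andbT; lia.
Qed.

Lemma greedy_match_sound zv avail M :
  sorted gtn zv -> uniq avail -> greedy_match zv avail = Some M ->
  [/\ map fst M = zv, {subset map snd M <= avail},
      all (fun p => p.2 <= p.1) M & {in M &, forall p q, p.1 < q.1 -> p.2 < q.2}].
Proof.
elim: zv avail M => [|i zv IH] avail M /=; first by move=> _ _ [<-].
move=> si ua.
case E: [seq j <- avail | j <= i] => [//|x s].
set j := foldr maxn 0 (x :: s).
have : j \in [seq j <- avail | j <= i] by rewrite E foldr_maxn_mem.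
rewrite mem_filter => /andP [ji ja].
case EM: (greedy_match zv (rem j avail)) => [M'|//] [<-].
have [fstM' sndM' leM' monoM'] := IH _ _ (path_sorted si) (rem_uniq _ ua) EM.
have /allP lti := order_path_min (rev_trans ltn_trans) si.
have fst_lt q : q \in M' -> q.1 < i by move=> qM; apply: lti; rewrite -fstM' map_f.
have snd_lt q : q \in M' -> q.2 < j.
  move=> qM; have := sndM' q.2 (map_f _ qM).
  rewrite (mem_rem_uniq _ ua) inE => /andP [q2j q2a].
  have : q.2 \in [seq j <- avail | j <= i].
    by rewrite mem_filter q2a (leq_trans (allP leM' q qM)) // ltnW // fst_lt.
  by rewrite E => /foldr_maxn_ub; rewrite leq_eqVlt (negbTE q2j).
split=> /=.
- by rewrite fstM'.
- move=> y /predU1P [-> // | /sndM'].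
  by rewrite (mem_rem_uniq _ ua) inE => /andP [].
- by rewrite ji leM'.
- move=> p q /predU1P [-> | pM] /predU1P [-> | qM] /=.
  + by rewrite ltnn.
  + by move/(ltn_trans (fst_lt q qM)); rewrite ltnn.
  + by move=> _; apply: snd_lt.
  + exact: monoM'.
Qed.

Definition fun_of_pairs (M : seq (nat * nat)) (k : nat) : nat :=
  nth 0 (map snd M) (index k (map fst M)).

Lemma fun_of_pairsE M p : uniq (map fst M) -> p \in M -> fun_of_pairs M p.1 = p.2.
Proof.
rewrite /fun_of_pairs; elim: M => //= q M IH /andP [qM uM] /predU1P [-> | pM].
  by rewrite eqxx.
have -> : (q.1 == p.1) = false by apply: contraNF qM => /eqP ->; rewrite map_f.
exact: IH.
Qed.

Section ZeroSets.
Variable n : nat.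
Implicit Types (u v w : nvec n) (a b c : bvec n).

Lemma zeros_descE v : zeros_desc v = rev (zeros v).
Proof. by []. Qed.

Lemma mem_zeros v (i : 'I_n) : (val i \in zeros v) = (v i == 0).
Proof. by rewrite (mem_map val_inj) mem_filter mem_enum andbT. Qed.

Lemma zeros_lt v k : k \in zeros v -> k < n.
Proof. by case/mapP => i _ ->; apply: ltn_ord. Qed.

Lemma zeros_uniq v : uniq (zeros v).
Proof. by rewrite (map_inj_uniq val_inj) filter_uniq // enum_uniq. Qed.

Lemma zeros_desc_sorted v : sorted gtn (zeros_desc v).
Proof.
have : sorted ltn (zeros v).
  rewrite sorted_map sorted_filter //; first by move=> ? ? ?; apply: ltn_trans.
  by rewrite -sorted_map val_enum_ord iota_ltn_sorted.
by rewrite zeros_descE rev_sorted.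
Qed.

Lemma mem_zeros_desc v : zeros_desc v =i zeros v.
Proof. by move=> k; rewrite zeros_descE mem_rev. Qed.

Definition bvec_of_zeros (s : seq nat) : bvec n := [ffun k => val k \notin s].

Lemma zeros_bvec_of_zeros s : {in s, forall k, k < n} ->
  zeros (natv (bvec_of_zeros s)) =i s.
Proof.
move=> s_lt k; case: (ltnP k n) => [kn | nk].
  by rewrite -[k]/(val (Ordinal kn)) mem_zeros !ffunE; case: (_ \in s).
apply/idP/idP => [/zeros_lt | /s_lt]; lia.
Qed.

Definition bounded_matching z v w : Prop :=
  exists2 M, matching v w = Some M & shifts_le z M.

Lemma embedding_bounded_matching z v w phi :
  shift_embedding z (zeros v) (zeros w) phi -> bounded_matching z v w.
Proof.
move=> hphi; apply: (greedy_match_complete (phi := phi)).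
- exact: zeros_desc_sorted.
- exact: zeros_uniq.
- by apply: eq_shift_embedding hphi => // k; rewrite mem_zeros_desc.
Qed.

Lemma bounded_matching_embedding z v w : bounded_matching z v w ->
  exists2 phi, shift_embedding z (zeros v) (zeros w) phi &
               {in zeros v &, {homo phi : x y / x < y}}.
Proof.
case=> M hM hz.
have [fstM sndM leM monoM] :=
  greedy_match_sound (zeros_desc_sorted v) (zeros_uniq w) hM.
have uM : uniq (map fst M) by rewrite fstM zeros_descE rev_uniq zeros_uniq.
have pair_of i : i \in zeros v -> exists2 p, p \in M & p.1 = i.
  by rewrite -mem_zeros_desc -fstM => /mapP [p pM ->]; exists p.
have mono : {in zeros v &, {homo fun_of_pairs M : x y / x < y}}.
  move=> _ _ /pair_of [p pM <-] /pair_of [q qM <-].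
  by rewrite !fun_of_pairsE //; apply: monoM.
exists (fun_of_pairs M) => //; split; last exact/incn_inj_in/leq_mono_in.
move=> _ /pair_of [p pM <-]; rewrite fun_of_pairsE // sndM ?map_f //=.
by rewrite (allP leM p pM) (allP hz p pM).
Qed.

Lemma bounded_matching_leq z z' v w :
  z <= z' -> bounded_matching z v w -> bounded_matching z' v w.
Proof.
move=> zz [M hM hz]; exists M => //.
by apply: sub_all hz => p /= /leq_trans; apply.
Qed.

Lemma bounded_matching_trans z1 z2 u v w :
  bounded_matching z1 u v -> bounded_matching z2 v w ->
  bounded_matching (z1 + z2) u w.
Proof.
move=> /bounded_matching_embedding [phi hphi _] /bounded_matching_embedding [psi hpsi _].
exact: embedding_bounded_matching (shift_embedding_comp hphi hpsi).
Qed.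

Lemma bounded_matching_split z v w : bounded_matching z.+1 v w ->
  exists c, bounded_matching 1 v (natv c) /\ bounded_matching z (natv c) w.
Proof.
case/bounded_matching_embedding => phi hphi mono.
have [psi [hpsi [chi hchi]]] := shift_embedding_split hphi mono.
have psi_lt : {in map psi (zeros v), forall k, k < n}.
  move=> _ /mapP [i iv ->]; have /and3P [_ le _] := hpsi.1 i iv.
  exact: leq_ltn_trans le (zeros_lt iv).
have Ec := zeros_bvec_of_zeros psi_lt.
exists (bvec_of_zeros (map psi (zeros v))); split.
  by apply: (embedding_bounded_matching (phi := psi)); apply: eq_shift_embedding hpsi.
by apply: (embedding_bounded_matching (phi := chi)); apply: eq_shift_embedding hchi.
Qed.

Lemma prefix_sum_natv a (i : 'I_n) :
  \sum_(k < n | k <= i) natv a k + count (fun x => x <= i) (zeros (natv a)) =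
  \sum_(k < n | k <= i) 1.
Proof.
rewrite count_map count_filter -sum1_count big_enum_cond /=.
rewrite [X in X + _]big_mkcond [X in _ + X]big_mkcond [RHS]big_mkcond -big_split.
by apply: eq_bigr => k _; rewrite ffunE; case: (a k); case: (k <= i).
Qed.

(* A vector in {0,1}^n has prefix sums equal to the prefix length minus the
   number of its zeros in the prefix, and the injection only moves zeros left. *)
Lemma shift_embedding_dom z a b phi :
  shift_embedding z (zeros (natv a)) (zeros (natv b)) phi -> dom (natv a) (natv b).
Proof.
move=> hphi; apply/forallP => i.
have := prefix_sum_natv a i; have := prefix_sum_natv b i.
have := shift_embedding_count_leq i (zeros_uniq _) hphi; lia.
Qed.

Lemma chi_natv a : chi (natv a) = natv a.
Proof. by apply/ffunP => i; rewrite !ffunE; case: (a i). Qed.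

Lemma zval_leq z M : (zval M <= z) = (0 < z) && shifts_le z M.
Proof.
rewrite /zval geq_max andbC foldr_maxn_leq all_map.
by congr (_ && _); apply: eq_all.
Qed.

Lemma zdom_bounded_matching z v w : zdom z v w -> 0 < z /\ bounded_matching z v w.
Proof.
case/and3P => _ _; case E: matching => [M|//] /eqP hz.
have := leqnn z; rewrite -{1}hz zval_leq => /andP [z0 hM].
by split=> //; exists M.
Qed.

Lemma bounded_matching_zdom z a b : 0 < z -> bounded_matching z (natv a) (natv b) ->
  exists2 z', z' <= z & zdom z' (natv a) (natv b).
Proof.
move=> z0 hab; have [phi hphi _] := bounded_matching_embedding hab.
case: hab => M hM hz; exists (zval M); first by rewrite zval_leq z0.
by rewrite /zdom !chi_natv (shift_embedding_dom hphi) hM eqxx.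
Qed.

Lemma zdom1_bounded_matching a b :
  zdom 1 (natv a) (natv b) <-> bounded_matching 1 (natv a) (natv b).
Proof.
split=> [/zdom_bounded_matching [] // | /(bounded_matching_zdom (ltn0Sn 0))].
case=> z; rewrite leq_eqVlt ltnS leqn0 => /orP [/eqP -> // | /eqP ->].
by case/zdom_bounded_matching.
Qed.

End ZeroSets.

Lemma mulmx_nat_gt0 m p q (A : 'M[nat]_(m, p)) (B : 'M[nat]_(p, q)) i j :
  (0 < (A *m B)%R i j) = [exists k, (0 < A i k) && (0 < B k j)].
Proof.
rewrite mxE lt0n sum_nat_eq0 negb_forall; apply: eq_existsb => k.
by rewrite muln_eq0 negb_or -!lt0n.
Qed.

Lemma A_mat_gt0 n (a c : bvec n) :
  (0 < A_mat n (enum_rank a) (enum_rank c)) = zdom 1 (natv a) (natv c).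
Proof. by rewrite mxE !enum_rankK lt0b. Qed.

Lemma Apow_entry_gt0 n m (a b : bvec n) :
  0 < Apow_entry m.+1 a b <-> bounded_matching m.+1 (natv a) (natv b).
Proof.
elim: m a b => [|m IH] a b.
  by rewrite /Apow_entry GRing.expr1 A_mat_gt0; apply: zdom1_bounded_matching.
rewrite /Apow_entry GRing.exprS -mulmxE mulmx_nat_gt0; split.
  case/existsP => k; rewrite -(enum_valK k) A_mat_gt0.
  case/andP => /zdom1_bounded_matching h1 /IH h2.
  by rewrite -add1n; apply: bounded_matching_trans h1 h2.
case/bounded_matching_split => c [/zdom1_bounded_matching h1 /IH h2].
by apply/existsP; exists (enum_rank c); rewrite A_mat_gt0 h1.
Qed.

Theorem lemma5p24 (n m : nat) (a b : {ffun 'I_n -> bool}) :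
  0 < n -> 0 < m ->
  (0 < Apow_entry m a b -> 0 < Apow_entry m.+1 a b) /\
  (0 < Apow_entry m a b <-> exists z, z <= m /\ zdom z (natv a) (natv b)).
Proof.
move=> _; case: m => // m _; rewrite !Apow_entry_gt0; split.
  exact: bounded_matching_leq.
split=> [/(bounded_matching_zdom (ltn0Sn m)) [z] | [z [zm /zdom_bounded_matching [_]]]].
  by exists z.
exact: bounded_matching_leq.
Qed.
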